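(* Fix $N>0$ and let $S=\{(v,w)\in\mathbb{C}^2\times\mathbb{C}^2:\ [v\,w]=N\}$ where $[a\,b]:=a^{\dot2}b^{\dot1}-a^{\dot1}b^{\dot2}$. For $u\in\mathbb{C}^2\setminus\{0\}$ put $\hat u=(-\bar u^{\dot2},\bar u^{\dot1})$, $\|u\|^2=|u^{\dot1}|^2+|u^{\dot2}|^2$, $\vartheta=\sqrt{1+N/\|u\|^2}$, and for $\sigma\in\mathbb{C}^\times$ $$\Phi(u,\sigma)=\big(v(\sigma),w(\sigma)\big),\qquad v(\sigma)=u+\sigma\hat u,\quad w(\sigma)=\hat u+\sigma^{-1}\vartheta^2u .$$ Then: (i) $\Phi(u,\sigma)\in S$ for all $u\neq0,\sigma\neq0$; (ii) the map $\iota(v,w)=(-\hat w,\hat v)$ is a fixed-point-free antiholomorphic involution of $S$, and each reparametrized curve $\sigma\mapsto\Phi(u,\vartheta\sigma)$ is mapped by $\iota$ to itself, the point with parameter $\sigma$ going to the point with parameter $-1/\bar\sigma$; (iii) let $\Omega_N$ be the holomorphic $3$-form on $S$ equal to $-\,dv^{\dot1}\wedge dv^{\dot2}\wedge dw^{\dot1}/v^{\dot1}$ where $v^{\dot1}\neq0$ (the Poincaré residue of $-d^2v\wedge d^2w/([v\,w]-N)$). Then the fibre integral of $\Phi^*\Omega_N$ over a small circle $|\sigma|=\varepsilon$, oriented counterclockwise, satisfies $$\frac{1}{2\pi}\oint_{|\sigma|=\varepsilon}\Phi^*\Omega_N=\omega_N:=i\big(du^{\dot1}\wedge d\bar u^{\dot1}+du^{\dot2}\wedge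 d\bar u^{\dot2}\big)+iN\,\frac{[u\,du]\wedge[\hat u\,d\hat u]}{\|u\|^4},$$ and $\omega_N=i\partial\bar\partial K$ with $K=\|u\|^2+N\log\|u\|^2$.
   Context: Complex conjugation of a pair $a=(a^{\dot1},a^{\dot2})$ is the ''quaternionic conjugate'' $\hat a=(-\bar a^{\dot2},\bar a^{\dot1})$, applied componentwise also to differentials; $[u\,du]=u^{\dot2}du^{\dot1}-u^{\dot1}du^{\dot2}$ and $[\hat u\,d\hat u]=\bar u^{\dot2}d\bar u^{\dot1}-\bar u^{\dot1}d\bar u^{\dot2}$. The fibre integral of a form $d\sigma\wedge\beta+(\text{terms without }d\sigma,d\bar\sigma)$ over the circle is $(\oint\cdot\,d\sigma)\,\beta$, computed by residues in $\sigma$. *)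

From Stdlib Require Import Reals.
From Coquelicot Require Import Coquelicot.

Open Scope R_scope.

Definition C2 : Type := (C * C)%type.
Definition C4 : Type := (C2 * C2)%type.
Definition C3 : Type := (C2 * C)%type.

Definition C2add (a b : C2) : C2 := ((fst a + fst b)%C, (snd a + snd b)%C).
Definition C2scal (c : C) (a : C2) : C2 := ((c * fst a)%C, (c * snd a)%C).
Definition C2opp (a : C2) : C2 := ((- fst a)%C, (- snd a)%C).
Definition C2zero : C2 := (RtoC 0, RtoC 0).

Definition bracket (a b : C2) : C := (snd a * fst b - fst a * snd b)%C.

Definition hat (a : C2) : C2 := ((- Cconj (snd a))%C, Cconj (fst a)).

Definition nrm2 (u : C2) : R := (Cmod (fst u))^2 + (Cmod (snd u))^2.

Definition theta (N : R) (u : C2) : R := sqrt (1 + N / nrm2 u).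

Definition Squad (N : R) (p : C4) : Prop := bracket (fst p) (snd p) = RtoC N.

Definition Phi (N : R) (u : C2) (s : C) : C4 :=
  (C2add u (C2scal s (hat u)),
   C2add (hat u) (C2scal (/ s * RtoC ((theta N u)^2))%C u)).

Definition iotaS (p : C4) : C4 := (C2opp (hat (snd p)), hat (fst p)).

(** ---- Holomorphy on C^4 (Osgood's definition: continuous and complex
   differentiable in each of the four variables separately). *)
Definition comp4 (p : C4) (j : nat) : C :=
  match j with
  | 0%nat => fst (fst p) | 1%nat => snd (fst p)
  | 2%nat => fst (snd p) | _ => snd (snd p) end.

Definition upd4 (p : C4) (j : nat) (z : C) : C4 :=
  match j with
  | 0%nat => ((z, snd (fst p)), snd p)
  | 1%nat => ((fst (fst p), z), snd p)
  | 2%nat => (fst p, (z, snd (snd p)))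
  | _ => (fst p, (fst (snd p), z)) end.

Definition holomorphic4 (F : C4 -> C) : Prop :=
  forall p : C4,
    @continuous (prod_UniformSpace (prod_UniformSpace C_UniformSpace C_UniformSpace)
                                   (prod_UniformSpace C_UniformSpace C_UniformSpace))
                C_UniformSpace F p /\
    forall j : nat, (j < 4)%nat ->
      @ex_derive C_AbsRing C_NormedModule (fun z => F (upd4 p j z)) (comp4 p j).

Definition antiholomorphic4 (f : C4 -> C4) : Prop :=
  forall k : nat, (k < 4)%nat -> holomorphic4 (fun p => Cconj (comp4 (f p) k)).

Definition dR (g : R -> C) : C :=
  (Derive (fun t => Re (g t)) 0, Derive (fun t => Im (g t)) 0).

Definition dPhi (N : R) (p x : C3) : C4 :=
  let g := fun t : R =>
    Phi N (C2add (fst p) (C2scal (RtoC t) (fst x))) (snd p + RtoC t * snd x)%C in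
  ((dR (fun t => fst (fst (g t))), dR (fun t => snd (fst (g t)))),
   (dR (fun t => fst (snd (g t))), dR (fun t => snd (snd (g t))))).

(** ---- The 3-form Omega_N = - dv^1 /\ dv^2 /\ dw^1 / v^1 (on the chart v^1 <> 0),
   evaluated at a point q of C^4 on three (real) tangent vectors a b c of C^4:
   (alpha1 /\ alpha2 /\ alpha3)(a,b,c) = det [alpha_i(x_j)]. *)
Definition det3 (a11 a12 a13 a21 a22 a23 a31 a32 a33 : C) : C :=
  (a11 * (a22 * a33 - a23 * a32) - a12 * (a21 * a33 - a23 * a31)
   + a13 * (a21 * a32 - a22 * a31))%C.

Definition OmegaN (q a b c : C4) : C :=
  (- det3 (fst (fst a)) (fst (fst b)) (fst (fst c))
          (snd (fst a)) (snd (fst b)) (snd (fst c))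
          (fst (snd a)) (fst (snd b)) (fst (snd c))
     / fst (fst q))%C.

Definition PhiOmega (N : R) (p x y z : C3) : C :=
  OmegaN (Phi N (fst p) (snd p)) (dPhi N p x) (dPhi N p y) (dPhi N p z).

Definition RIntC (f : R -> C) (a b : R) : C :=
  (RInt (fun t => Re (f t)) a b, RInt (fun t => Im (f t)) a b).

(** Fibre integral over the circle |sigma| = eps, counterclockwise,
   parametrized by gamma(t) = eps e^{it}, t in [0, 2 pi]: the 2-form on
   u-space whose value on real tangent vectors X, Y of C^2 is
   \int_0^{2pi} (Phi^*Omega_N)_{(u,gamma t)}(gamma'(t), (X,0), (Y,0)) dt. *)
Definition gammaC (eps t : R) : C := (eps * cos t, eps * sin t).
Definition gammaC' (eps t : R) : C := (- eps * sin t, eps * cos t).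

Definition fibre_int (N eps : R) (u X Y : C2) : C :=
  RIntC (fun t => PhiOmega N (u, gammaC eps t) (C2zero, gammaC' eps t)
                          (X, RtoC 0) (Y, RtoC 0)) 0 (2 * PI).

(** omega_N evaluated on real tangent vectors X, Y of C^2 at u, using
   du^j(X) = X^j, d\bar u^j(X) = conj X^j, (a /\ b)(X,Y) = a(X)b(Y) - a(Y)b(X),
   [u du] = u^2 du^1 - u^1 du^2, [\hat u d\hat u] = \bar u^2 d\bar u^1 - \bar u^1 d\bar u^2. *)
Definition wedge1 (a b : C2 -> C) (X Y : C2) : C := (a X * b Y - a Y * b X)%C.
Definition du1 (X : C2) : C := fst X.
Definition du2 (X : C2) : C := snd X.
Definition dub1 (X : C2) : C := Cconj (fst X).
Definition dub2 (X : C2) : C := Cconj (snd X).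

Definition omegaN (N : R) (u X Y : C2) : C :=
  let udu := fun X : C2 => (snd u * du1 X - fst u * du2 X)%C in
  let hdh := fun X : C2 => (Cconj (snd u) * dub1 X - Cconj (fst u) * dub2 X)%C in
  (Ci * (wedge1 du1 dub1 X Y + wedge1 du2 dub2 X Y)
   + Ci * RtoC N * wedge1 udu hdh X Y / RtoC ((nrm2 u)^2))%C.

Definition pdR (f : C2 -> C) (u e : C2) : C :=
  dR (fun t => f (C2add u (C2scal (RtoC t) e))).

Definition e2 (j : nat) (c : C) : C2 :=
  match j with 0%nat => (c, RtoC 0) | _ => (RtoC 0, c) end.

Definition Wd (j : nat) (f : C2 -> C) (u : C2) : C :=
  (/ 2 * (pdR f u (e2 j (RtoC 1)) - Ci * pdR f u (e2 j Ci)))%C.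
Definition Wdb (j : nat) (f : C2 -> C) (u : C2) : C :=
  (/ 2 * (pdR f u (e2 j (RtoC 1)) + Ci * pdR f u (e2 j Ci)))%C.

Definition duj (j : nat) (X : C2) : C := match j with 0%nat => du1 X | _ => du2 X end.
Definition dubj (j : nat) (X : C2) : C := match j with 0%nat => dub1 X | _ => dub2 X end.

Definition ddbar (f : C2 -> C) (u X Y : C2) : C :=
  (Wd 0 (Wdb 0 f) u * wedge1 (duj 0) (dubj 0) X Y
   + Wd 0 (Wdb 1 f) u * wedge1 (duj 0) (dubj 1) X Y
   + Wd 1 (Wdb 0 f) u * wedge1 (duj 1) (dubj 0) X Y
   + Wd 1 (Wdb 1 f) u * wedge1 (duj 1) (dubj 1) X Y)%C.

Definition Kpot (N : R) (u : C2) : C := RtoC (nrm2 u + N * ln (nrm2 u)).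

From Stdlib Require Import Reals Lra Lia FunctionalExtensionality.
From Coquelicot Require Import Coquelicot.
Open Scope R_scope.

(** Every assertion of the theorem becomes an identity between rational
   expressions in the coordinates and their conjugates once the analytic
   objects of the statement (real derivatives, the circle integral, the
   Wirtinger derivatives) are computed in closed form.
   - A small calculus of real derivatives at 0 of curves R -> C
     ([has_dR0], with sum, product, inverse and conjugation rules) evaluates
     the operator [dR] used in all definitions.
   - (i) and the algebraic parts of (ii) are field identities; iotaS is
     antiholomorphic because each conjugated component of iotaS is, up to
     sign, a coordinate projection.
   - (iii), fibre integral: [dPhi] is computed in closed form
     ([dPhi_closed_form]); on the chart v^1 <> 0 the integrand is then the
     Laurent polynomial c_{-1}/sigma + omega_N + c_1 sigma
     ([pullback_laurent]).  On sigma = eps e^{it} the outer terms are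
     trigonometric and integrate to zero over a period, and small circles
     stay in the chart ([small_circles_in_chart]).
   - (iii), potential: d/d(conj u^k) K = u^k theta^2 ([Wdb_Kpot]); one more
     derivative gives the Levi form of K ([Wd_Wdb_Kpot]), after which
     omega_N = i d d-bar K is again a field identity. *)

(** ** Real derivatives at 0 of curves in C *)

Definition has_dR0 (g : R -> C) (l : C) : Prop :=
  is_derive (fun t => fst (g t)) 0 (fst l) /\ is_derive (fun t => snd (g t)) 0 (snd l).

Lemma has_dR0_dR g l : has_dR0 g l -> dR g = l.
Proof.
  intros [H1 H2]. unfold dR. destruct l as [a b].
  f_equal; apply is_derive_unique; assumption.
Qed.

Lemma has_dR0_eq g l m : has_dR0 g l -> l = m -> has_dR0 g m.
Proof. intros H <-; exact H. Qed.

Lemma dR_of_has_dR0 g l m : has_dR0 g l -> l = m -> dR g = m.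
Proof. intros H <-. apply has_dR0_dR; auto. Qed.

Lemma has_dR0_ext_loc g h l : locally 0 (fun t => g t = h t) -> has_dR0 h l -> has_dR0 g l.
Proof.
  intros E [H1 H2]; split.
  - apply (is_derive_ext_loc (fun t => fst (h t))); auto.
    apply (filter_imp (fun t => g t = h t)); [intros t ->; reflexivity | exact E].
  - apply (is_derive_ext_loc (fun t => snd (h t))); auto.
    apply (filter_imp (fun t => g t = h t)); [intros t ->; reflexivity | exact E].
Qed.

Lemma has_dR0_ext g h l : (forall t, g t = h t) -> has_dR0 h l -> has_dR0 g l.
Proof. intros E. apply has_dR0_ext_loc, filter_forall. exact E. Qed.

Lemma has_dR0_const c : has_dR0 (fun _ => c) (RtoC 0).
Proof. split; simpl; auto_derive; auto. Qed.

Lemma has_dR0_lin c : has_dR0 (fun t => (RtoC t * c)%C) c.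
Proof. destruct c as [a b]; split; simpl; auto_derive; auto; ring. Qed.

Lemma has_dR0_RtoC f l : is_derive f 0 l -> has_dR0 (fun t => RtoC (f t)) (RtoC l).
Proof. intros A; split; simpl; auto. auto_derive; auto. Qed.

Lemma has_dR0_Re f l : has_dR0 (fun t => RtoC (f t)) l -> is_derive f 0 (fst l).
Proof. intros [A _]; exact A. Qed.

Ltac to_Reals :=
  repeat match goal with H : is_derive _ _ _ |- _ => apply is_derive_Reals in H end;
  apply is_derive_Reals.

Lemma has_dR0_plus g h a b :
  has_dR0 g a -> has_dR0 h b -> has_dR0 (fun t => (g t + h t)%C) (a + b)%C.
Proof.
  intros [A1 A2] [B1 B2]; split; simpl; to_Reals.
  - apply (derivable_pt_lim_plus (fun t => fst (g t)) (fun t => fst (h t))); auto.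
  - apply (derivable_pt_lim_plus (fun t => snd (g t)) (fun t => snd (h t))); auto.
Qed.

Lemma has_dR0_opp g a : has_dR0 g a -> has_dR0 (fun t => (- g t)%C) (- a)%C.
Proof.
  intros [A1 A2]; split; simpl; to_Reals.
  - apply (derivable_pt_lim_opp (fun t => fst (g t))); auto.
  - apply (derivable_pt_lim_opp (fun t => snd (g t))); auto.
Qed.

Lemma has_dR0_minus g h a b :
  has_dR0 g a -> has_dR0 h b -> has_dR0 (fun t => (g t - h t)%C) (a - b)%C.
Proof. intros A B. apply has_dR0_plus; auto. apply has_dR0_opp; auto. Qed.

Lemma has_dR0_mult g h a b : has_dR0 g a -> has_dR0 h b ->
  has_dR0 (fun t => (g t * h t)%C) (a * h 0 + g 0 * b)%C.
Proof.
  intros [A1 A2] [B1 B2]; split; simpl; to_Reals.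
  - replace (fst a * fst (h 0) - snd a * snd (h 0) + (fst (g 0) * fst b - snd (g 0) * snd b))
      with ((fst a * fst (h 0) + fst (g 0) * fst b) - (snd a * snd (h 0) + snd (g 0) * snd b))
      by ring.
    apply (derivable_pt_lim_minus (fun t => fst (g t) * fst (h t)) (fun t => snd (g t) * snd (h t)));
      [apply (derivable_pt_lim_mult (fun t => fst (g t)) (fun t => fst (h t)))
      |apply (derivable_pt_lim_mult (fun t => snd (g t)) (fun t => snd (h t)))]; auto.
  - replace (fst a * snd (h 0) + snd a * fst (h 0) + (fst (g 0) * snd b + snd (g 0) * fst b))
      with ((fst a * snd (h 0) + fst (g 0) * snd b) + (snd a * fst (h 0) + snd (g 0) * fst b))
      by ring.
    apply (derivable_pt_lim_plus (fun t => fst (g t) * snd (h t)) (fun t => snd (g t) * fst (h t)));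
      [apply (derivable_pt_lim_mult (fun t => fst (g t)) (fun t => snd (h t)))
      |apply (derivable_pt_lim_mult (fun t => snd (g t)) (fun t => fst (h t)))]; auto.
Qed.

Lemma has_dR0_conj g a : has_dR0 g a -> has_dR0 (fun t => Cconj (g t)) (Cconj a).
Proof.
  intros [A1 A2]; split; simpl; to_Reals; auto.
  apply (derivable_pt_lim_opp (fun t => snd (g t))); auto.
Qed.

Lemma derivable_pt_lim_value f x l1 l2 :
  derivable_pt_lim f x l1 -> l1 = l2 -> derivable_pt_lim f x l2.
Proof. intros H <-; exact H. Qed.

(** Quotient rule for 1/g, through 1/g = conj g / |g|^2. *)
Lemma has_dR0_inv g a : g 0 <> RtoC 0 -> has_dR0 g a ->
  has_dR0 (fun t => (/ g t)%C) (- a / (g 0 * g 0))%C.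
Proof.
  intros Hz [A1 A2].
  assert (Hn : fst (g 0) * fst (g 0) + snd (g 0) * snd (g 0) <> 0).
  { intro E. apply Hz. destruct (g 0) as [x y]; simpl in *.
    assert (x = 0) by nra. assert (y = 0) by nra. subst; reflexivity. }
  apply is_derive_Reals in A1; apply is_derive_Reals in A2.
  assert (Dnorm : derivable_pt_lim
            (fun t => fst (g t) * fst (g t) + snd (g t) * snd (g t)) 0
            (fst a * fst (g 0) + fst (g 0) * fst a + (snd a * snd (g 0) + snd (g 0) * snd a))).
  { apply (derivable_pt_lim_plus (fun t => fst (g t) * fst (g t)) (fun t => snd (g t) * snd (g t)));
      [apply (derivable_pt_lim_mult (fun t => fst (g t)) (fun t => fst (g t)))
      |apply (derivable_pt_lim_mult (fun t => snd (g t)) (fun t => snd (g t)))]; auto. }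
  split; apply is_derive_Reals.
  - apply (derivable_pt_lim_ext
             (fun t => fst (g t) / (fst (g t) * fst (g t) + snd (g t) * snd (g t)))).
    { intro t. simpl. unfold Rdiv. f_equal. f_equal. ring. }
    eapply derivable_pt_lim_value.
    { apply (derivable_pt_lim_div (fun t => fst (g t)) _ 0 (fst a) _ A1 Dnorm Hn). }
    destruct a as [a1 a2]; destruct (g 0) as [x y]; simpl in *. unfold Rsqr. field. nra.
  - apply (derivable_pt_lim_ext
             (fun t => (- snd (g t)) / (fst (g t) * fst (g t) + snd (g t) * snd (g t)))).
    { intro t. simpl. unfold Rdiv. f_equal. f_equal. ring. }
    eapply derivable_pt_lim_value.
    { apply (derivable_pt_lim_div (fun t => - snd (g t)) _ 0 (- snd a) _
               (derivable_pt_lim_opp (fun t => snd (g t)) 0 _ A2) Dnorm Hn). }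
    destruct a as [a1 a2]; destruct (g 0) as [x y]; simpl in *. unfold Rsqr. field. nra.
Qed.

Ltac derive_C := lazymatch goal with
 | |- has_dR0 (fun _ => ?c) _ => apply has_dR0_const
 | |- has_dR0 (fun t => (RtoC t * ?c)%C) _ => apply has_dR0_lin
 | |- has_dR0 (fun t => (_ + _)%C) _ => apply has_dR0_plus; derive_C
 | |- has_dR0 (fun t => (_ - _)%C) _ => apply has_dR0_minus; derive_C
 | |- has_dR0 (fun t => (- _)%C) _ => apply has_dR0_opp; derive_C
 | |- has_dR0 (fun t => Cconj _) _ => apply has_dR0_conj; derive_C
 | |- has_dR0 (fun t => (/ _)%C) _ => apply has_dR0_inv; [ | derive_C]
 | |- has_dR0 (fun t => (_ * _)%C) _ => apply has_dR0_mult; derive_C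
 end.

Ltac simpl_zero := repeat rewrite ?Cmult_0_l, ?Cplus_0_l, ?Cplus_0_r, ?Cmult_0_r.

Lemma Cconj_RtoC r : Cconj (RtoC r) = RtoC r.
Proof. unfold Cconj, RtoC; simpl; f_equal; ring. Qed.

Lemma Cconj_inv a : Cconj (/ a) = (/ Cconj a)%C.
Proof.
  destruct a as [x y]; unfold Cconj, Cinv; simpl.
  replace (- y * (- y * 1)) with (y * (y * 1)) by ring. f_equal; unfold Rdiv; ring.
Qed.

Lemma Cconj_Ci : Cconj Ci = (- Ci)%C.
Proof. unfold Cconj, Ci, Copp; simpl; f_equal; ring. Qed.

Lemma Cconj_neq_0 s : s <> RtoC 0 -> Cconj s <> RtoC 0.
Proof. intros H E. apply H. rewrite <- (Cconj_conj s), E. apply Cconj_RtoC. Qed.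

Lemma Ci_sq : (Ci * Ci = - RtoC 1)%C.
Proof. unfold Ci, Cmult, Copp, RtoC; simpl. f_equal; ring. Qed.

Lemma Ci_pow2 : (Ci ^ 2 = - 1)%C.
Proof. unfold Ci, Cpow, Cmult, RtoC; simpl. f_equal; ring. Qed.

Ltac conjs := repeat (rewrite ?Cplus_conj, ?Cminus_conj, ?Cmult_conj, ?Copp_conj,
  ?Cconj_RtoC, ?Cconj_inv, ?Cconj_conj, ?Cconj_Ci, ?Cpow_conj).

Definition nrm2C (q : C2) : C := (fst q * Cconj (fst q) + snd q * Cconj (snd q))%C.

Lemma nrm2_nrm2C q : RtoC (nrm2 q) = nrm2C q.
Proof. unfold nrm2, nrm2C. rewrite RtoC_plus, !Cmod2_conj. reflexivity. Qed.

Lemma nrm2_ge0 q : 0 <= nrm2 q.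
Proof. unfold nrm2. nra. Qed.

Lemma nrm2_zero : nrm2 C2zero = 0.
Proof. unfold nrm2, C2zero; simpl. rewrite Cmod_0. ring. Qed.

Lemma nrm2_pos u : u <> C2zero -> 0 < nrm2 u.
Proof.
  intro H. pose proof (nrm2_ge0 u). destruct (Req_dec (nrm2 u) 0) as [E|E]; [|lra].
  exfalso. apply H. unfold nrm2 in E. destruct u as [a b]. simpl in E.
  pose proof (Cmod_ge_0 a). pose proof (Cmod_ge_0 b).
  assert (Ea : Cmod a = 0) by nra. assert (Eb : Cmod b = 0) by nra.
  apply Cmod_eq_0 in Ea. apply Cmod_eq_0 in Eb. subst. reflexivity.
Qed.

Lemma nrm2C_neq_0 u : u <> C2zero -> nrm2C u <> RtoC 0.
Proof.
  intro H. rewrite <- nrm2_nrm2C. intro E. apply RtoC_inj in E.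
  pose proof (nrm2_pos u H). lra.
Qed.

(** theta^2 = 1 + N/||u||^2 as a rational expression; at u = 0 both sides
   read 1 with the convention 1/0 = 0, so no hypothesis on u is needed
   (curves u + tX may pass through 0). *)
Definition theta2C (N : R) (u : C2) : C := (1 + RtoC N * / nrm2C u)%C.

Lemma theta_radicand_pos N q : 0 < N -> 0 < 1 + N / nrm2 q.
Proof.
  intro HN. destruct (Req_dec (nrm2 q) 0) as [E|E].
  - rewrite E. unfold Rdiv. rewrite Rinv_0. lra.
  - assert (0 < nrm2 q) by (pose proof (nrm2_ge0 q); lra).
    assert (0 < N / nrm2 q) by (apply Rdiv_lt_0_compat; auto). lra.
Qed.

Lemma theta_sq N q : 0 < N -> (theta N q)^2 = 1 + N / nrm2 q.
Proof. intro HN. apply pow2_sqrt, Rlt_le, theta_radicand_pos, HN. Qed.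

Lemma theta_pos N u : 0 < N -> 0 < theta N u.
Proof. intro HN. apply sqrt_lt_R0, theta_radicand_pos, HN. Qed.

Lemma theta_sq_C N q : 0 < N -> RtoC ((theta N q)^2) = theta2C N q.
Proof.
  intro HN. rewrite theta_sq by auto. unfold theta2C. rewrite <- nrm2_nrm2C.
  destruct (Req_dec (nrm2 q) 0) as [E|E].
  - rewrite E. unfold Rdiv. rewrite Rinv_0.
    unfold RtoC, Cinv, Cplus, Cmult; simpl. f_equal; unfold Rdiv; rewrite ?Rmult_0_l, ?Rinv_0; ring.
  - rewrite RtoC_plus, <- RtoC_inv, <- RtoC_mult by auto. reflexivity.
Qed.

(** ** (i) Phi takes values in S *)

Lemma Phi_in_S N u s : 0 < N -> u <> C2zero -> s <> RtoC 0 -> Squad N (Phi N u s).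
Proof.
  intros HN Hu Hs. pose proof (nrm2C_neq_0 u Hu) as Hr.
  unfold Squad, Phi, bracket, C2add, C2scal, hat. cbn [fst snd].
  rewrite theta_sq_C by auto. unfold theta2C, nrm2C in *.
  destruct u as [u1 u2]. cbn [fst snd] in *. field. auto.
Qed.

(** ** (ii) The real structure iotaS *)

Lemma iotaS_preserves_S N p : Squad N p -> Squad N (iotaS p).
Proof.
  destruct p as [[v1 v2] [w1 w2]]. unfold Squad, iotaS, bracket, C2opp, hat; cbn [fst snd].
  intro H. rewrite <- Cconj_RtoC, <- H. conjs. ring.
Qed.

Lemma iotaS_involutive p : iotaS (iotaS p) = p.
Proof.
  destruct p as [[v1 v2] [w1 w2]]. unfold iotaS, C2opp, hat; cbn [fst snd].
  conjs. f_equal; f_equal; ring.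
Qed.

(** A fixed point would have v = -\hat w, hence [v w] = -||w||^2 <= 0 < N. *)
Lemma iotaS_no_fixed_point N p : 0 < N -> Squad N p -> iotaS p <> p.
Proof.
  intro HN. destruct p as [[v1 v2] [w1 w2]].
  unfold Squad, iotaS, bracket, C2opp, hat; cbn [fst snd].
  intros H E. injection E; intros _ _ E2 E1.
  rewrite <- E1, <- E2 in H.
  assert (H' : RtoC (- (Cmod w1 ^ 2 + Cmod w2 ^ 2)) = RtoC N).
  { rewrite <- H. rewrite RtoC_opp, RtoC_plus, !Cmod2_conj. ring. }
  apply RtoC_inj in H'. pose proof (pow2_ge_0 (Cmod w1)). pose proof (pow2_ge_0 (Cmod w2)). lra.
Qed.

Lemma iotaS_Phi N u s : 0 < N -> s <> RtoC 0 ->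
  iotaS (Phi N u (RtoC (theta N u) * s)%C) = Phi N u (RtoC (theta N u) * (- / Cconj s))%C.
Proof.
  intros HN Hs. pose proof (theta_pos N u HN) as Ht.
  assert (Htc : RtoC (theta N u) <> RtoC 0) by (intro E; apply RtoC_inj in E; lra).
  pose proof (Cconj_neq_0 s Hs) as Hcs.
  unfold iotaS, Phi, C2opp, C2add, C2scal, hat. cbn [fst snd]. rewrite RtoC_pow.
  set (th := RtoC (theta N u)). destruct u as [u1 u2]. cbn [fst snd]. conjs.
  unfold th. rewrite Cconj_RtoC. fold th.
  f_equal; f_equal; field; auto.
Qed.

Lemma norm_C_zero (z : C) : z = RtoC 0 -> @norm C_AbsRing C_NormedModule z = 0.
Proof. intros ->. apply Cmod_0. Qed.

Lemma ex_derive_C_id a : @ex_derive C_AbsRing C_NormedModule (fun z => z) a.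
Proof.
  exists (RtoC 1). split.
  - apply is_linear_scal_l.
  - intros x Hx eps. apply filter_forall. intro y.
    eapply Rle_trans; [right; apply norm_C_zero|].
    + change ((y - x) - (y - x) * RtoC 1 = RtoC 0)%C. ring.
    + apply Rmult_le_pos; [apply Rlt_le, cond_pos | apply norm_ge_0].
Qed.

Lemma holomorphic4_coord m : (m < 4)%nat -> holomorphic4 (fun p => comp4 p m).
Proof.
  intros Hm p. destruct p as [[a b] [c d]]. split.
  - destruct m as [|[|[|[|m]]]]; simpl; try lia.
    + apply (continuous_comp fst fst); [apply continuous_fst | apply continuous_fst].
    + apply (continuous_comp fst snd); [apply continuous_fst | apply continuous_snd].
    + apply (continuous_comp snd fst); [apply continuous_snd | apply continuous_fst].
    + apply (continuous_comp snd snd); [apply continuous_snd | apply continuous_snd].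
  - intros j Hj. destruct m as [|[|[|[|m]]]]; try lia;
      destruct j as [|[|[|[|j]]]]; try lia; simpl;
      first [apply ex_derive_C_id | apply ex_derive_const].
Qed.

Lemma holomorphic4_opp F : holomorphic4 F -> holomorphic4 (fun p => opp (F p)).
Proof.
  intros H p. destruct (H p) as [H1 H2]. split.
  - exact (@continuous_opp _ C_AbsRing C_NormedModule F p H1).
  - intros j Hj. exact (@ex_derive_opp C_AbsRing C_NormedModule _ _ (H2 j Hj)).
Qed.

(** conj of the components of iotaS(v,w) = (-\hat w, \hat v) are w^2, -w^1, -v^2, v^1. *)
Lemma iotaS_antiholomorphic : antiholomorphic4 iotaS.
Proof.
  intros k Hk. destruct k as [|[|[|[|k]]]]; try lia.
  - replace (fun p : C4 => Cconj (comp4 (iotaS p) 0)) with (fun p : C4 => comp4 p 3).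
    + apply holomorphic4_coord; lia.
    + apply functional_extensionality. intros [[a b] [c d]].
      unfold iotaS, C2opp, hat; simpl. conjs. ring.
  - replace (fun p : C4 => Cconj (comp4 (iotaS p) 1)) with (fun p : C4 => opp (comp4 p 2)).
    + apply holomorphic4_opp, holomorphic4_coord; lia.
    + apply functional_extensionality. intros [[a b] [c d]].
      unfold iotaS, C2opp, hat; simpl. conjs. reflexivity.
  - replace (fun p : C4 => Cconj (comp4 (iotaS p) 2)) with (fun p : C4 => opp (comp4 p 1)).
    + apply holomorphic4_opp, holomorphic4_coord; lia.
    + apply functional_extensionality. intros [[a b] [c d]].
      unfold iotaS, C2opp, hat; simpl. conjs. reflexivity.
  - replace (fun p : C4 => Cconj (comp4 (iotaS p) 3)) with (fun p : C4 => comp4 p 0).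
    + apply holomorphic4_coord; lia.
    + apply functional_extensionality. intros [[a b] [c d]].
      unfold iotaS, C2opp, hat; simpl. conjs. reflexivity.
Qed.

(** ** (iii) The differential of Phi *)

Definition dnrm2C (u X : C2) : C :=
  (fst X * Cconj (fst u) + fst u * Cconj (fst X) + (snd X * Cconj (snd u) + snd u * Cconj (snd X)))%C.
Definition dtheta2C (N : R) (u X : C2) : C := (RtoC N * (- dnrm2C u X / (nrm2C u * nrm2C u)))%C.

Definition dPhiC (N : R) (u : C2) (s : C) (X : C2) (z : C) : C4 :=
 ((fst X + (z * - Cconj (snd u) + s * - Cconj (snd X)),
   snd X + (z * Cconj (fst u) + s * Cconj (fst X))),
  (- Cconj (snd X) + ((- z / (s*s) * theta2C N u + / s * dtheta2C N u X) * fst u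
                      + / s * theta2C N u * fst X),
   Cconj (fst X) + ((- z / (s*s) * theta2C N u + / s * dtheta2C N u X) * snd u
                    + / s * theta2C N u * snd X)))%C.

Lemma dPhi_closed_form N u s X z : 0 < N -> u <> C2zero -> s <> RtoC 0 ->
  dPhi N (u, s) (X, z) = dPhiC N u s X z.
Proof.
  intros HN Hu Hs. pose proof (nrm2C_neq_0 u Hu) as Hr. unfold nrm2C in Hr.
  unfold dPhi, dPhiC, Phi, C2add, C2scal, hat. cbn [fst snd].
  f_equal; f_equal.
  - eapply dR_of_has_dR0. { derive_C. } cbv beta. conjs. ring.
  - eapply dR_of_has_dR0. { derive_C. } cbv beta. conjs. ring.
  - eapply dR_of_has_dR0.
    { eapply has_dR0_ext. { intro t. rewrite theta_sq_C by auto. reflexivity. }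
      unfold theta2C, nrm2C; cbn [fst snd]. derive_C; cbv beta; conjs; simpl_zero; auto. }
    cbv beta; conjs; simpl_zero. unfold theta2C, dtheta2C, dnrm2C, nrm2C. field. auto.
  - eapply dR_of_has_dR0.
    { eapply has_dR0_ext. { intro t. rewrite theta_sq_C by auto. reflexivity. }
      unfold theta2C, nrm2C; cbn [fst snd]. derive_C; cbv beta; conjs; simpl_zero; auto. }
    cbv beta; conjs; simpl_zero. unfold theta2C, dtheta2C, dnrm2C, nrm2C. field. auto.
Qed.

Definition coef_m1 (N : R) (u X Y : C2) : C := (Ci * theta2C N u * wedge1 du1 du2 X Y)%C.
Definition coef_p1 (X Y : C2) : C := (Ci * Cconj (wedge1 du1 du2 X Y))%C.

Lemma pullback_laurent N u s X Y : u <> C2zero -> s <> RtoC 0 ->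
  fst (fst (Phi N u s)) <> RtoC 0 ->
  OmegaN (Phi N u s) (dPhiC N u s C2zero (Ci * s)%C)
         (dPhiC N u s X (RtoC 0)) (dPhiC N u s Y (RtoC 0))
  = (coef_m1 N u X Y * / s + omegaN N u X Y + coef_p1 X Y * s)%C.
Proof.
  intros Hu Hs Hv. pose proof (nrm2C_neq_0 u Hu) as Hr.
  unfold Phi, C2add, C2scal, hat in Hv; cbn [fst snd] in Hv.
  unfold OmegaN, det3, omegaN, Phi, dPhiC, C2add, C2scal, hat, C2zero. cbn [fst snd].
  rewrite RtoC_pow, nrm2_nrm2C.
  unfold coef_m1, coef_p1, wedge1, du1, du2, dub1, dub2, theta2C, dtheta2C, dnrm2C, nrm2C in *.
  conjs. destruct u as [u1 u2]; destruct X as [x1 x2]; destruct Y as [y1 y2]; cbn [fst snd] in *.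
  rewrite !Cconj_RtoC. field. auto.
Qed.

(** ** (iii) Integration over the circle *)

Lemma RInt_trig k0 k1 k2 : RInt (fun t => k0 + k1 * cos t + k2 * sin t) 0 (2*PI) = 2*PI*k0.
Proof.
  pose proof (is_RInt_derive (V := R_CompleteNormedModule)
    (fun t => k0*t + k1*sin t - k2*cos t) (fun t => k0 + k1 * cos t + k2 * sin t) 0 (2*PI))
    as Hftc.
  assert (Hprim : is_RInt (fun t => k0 + k1 * cos t + k2 * sin t) 0 (2*PI)
     (minus ((fun t => k0*t + k1*sin t - k2*cos t) (2*PI))
            ((fun t => k0*t + k1*sin t - k2*cos t) 0))).
  { apply Hftc.
    - intros x _. auto_derive; auto. ring.
    - intros x _. apply (ex_derive_continuous (fun t => k0 + k1 * cos t + k2 * sin t)).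
      auto_derive; auto. }
  rewrite (is_RInt_unique _ _ _ _ Hprim).
  unfold minus, plus, opp; simpl. rewrite sin_2PI, cos_2PI, sin_0, cos_0. ring.
Qed.

Lemma RIntC_trig a b c :
  RIntC (fun t => a + b * RtoC (cos t) + c * RtoC (sin t))%C 0 (2*PI) = (RtoC (2*PI) * a)%C.
Proof.
  unfold RIntC. destruct a as [a1 a2], b as [b1 b2], c as [c1 c2]. simpl.
  rewrite (RInt_ext _ (fun t => a1 + b1 * cos t + c1 * sin t)).
  rewrite (RInt_ext (fun t => a2 + (b1 * 0 + b2 * cos t) + (c1 * 0 + c2 * sin t))
                    (fun t => a2 + b2 * cos t + c2 * sin t)).
  - rewrite !RInt_trig. unfold RtoC, Cmult; simpl. f_equal; ring.
  - intros x _. simpl. ring.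
  - intros x _. simpl. ring.
Qed.

Lemma cos_sin_sq t : cos t * cos t + sin t * sin t = 1.
Proof. pose proof (sin2_cos2 t). unfold Rsqr in H. lra. Qed.

Lemma gammaC_polar eps t : gammaC eps t = (RtoC eps * (RtoC (cos t) + Ci * RtoC (sin t)))%C.
Proof. unfold gammaC, RtoC, Ci, Cmult, Cplus; simpl. f_equal; ring. Qed.

Lemma gammaC'_eq eps t : gammaC' eps t = (Ci * gammaC eps t)%C.
Proof. unfold gammaC', gammaC, Ci, Cmult; simpl. f_equal; ring. Qed.

Lemma Cmod_gammaC eps t : 0 < eps -> Cmod (gammaC eps t) = eps.
Proof.
  intro He. pose proof (cos_sin_sq t). unfold Cmod, gammaC; simpl.
  replace (eps * cos t * (eps * cos t * 1) + eps * sin t * (eps * sin t * 1)) with (eps * eps) by nra.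
  apply sqrt_square. lra.
Qed.

Lemma gammaC_neq_0 eps t : 0 < eps -> gammaC eps t <> RtoC 0.
Proof.
  intros He E. pose proof (Cmod_gammaC eps t He) as M. rewrite E, Cmod_0 in M. lra.
Qed.

Lemma gammaC_inv eps t : 0 < eps ->
  (/ gammaC eps t)%C = (RtoC (/ eps) * (RtoC (cos t) - Ci * RtoC (sin t)))%C.
Proof.
  intro He. pose proof (cos_sin_sq t). pose proof (gammaC_neq_0 eps t He) as Hg.
  assert (P : (gammaC eps t * (RtoC (/ eps) * (RtoC (cos t) - Ci * RtoC (sin t))))%C = RtoC 1).
  { unfold gammaC, RtoC, Ci, Cmult, Cplus, Cminus, Copp; simpl.
    f_equal; field_simplify; try lra; nra. }
  rewrite <- (Cmult_1_r (/ gammaC eps t)), <- P. field. auto.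
Qed.

Lemma fibre_int_closed_form N eps u X Y : 0 < N -> u <> C2zero -> 0 < eps ->
  (forall t, fst (fst (Phi N u (gammaC eps t))) <> RtoC 0) ->
  fibre_int N eps u X Y = (RtoC (2*PI) * omegaN N u X Y)%C.
Proof.
  intros HN Hu He Hchart. unfold fibre_int.
  replace (fun t => PhiOmega N (u, gammaC eps t) (C2zero, gammaC' eps t) (X, RtoC 0) (Y, RtoC 0))
  with (fun t => (omegaN N u X Y
          + (coef_m1 N u X Y * RtoC (/ eps) + coef_p1 X Y * RtoC eps) * RtoC (cos t)
          + (coef_p1 X Y * RtoC eps * Ci - coef_m1 N u X Y * RtoC (/ eps) * Ci) * RtoC (sin t))%C).
  { apply RIntC_trig. }
  apply functional_extensionality; intro t. unfold PhiOmega. cbn [fst snd].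
  pose proof (gammaC_neq_0 eps t He) as Hg.
  rewrite !dPhi_closed_form, gammaC'_eq, pullback_laurent, gammaC_inv, gammaC_polar by auto.
  ring.
Qed.

(** Small circles avoid the zero of v^1(sigma) = u^1 - sigma conj(u^2), which
   (if it exists at all) lies at distance |u^1|/|u^2| > 0 from the origin. *)
Lemma small_circles_in_chart N u : u <> C2zero ->
  exists eps0, 0 < eps0 /\ forall eps, 0 < eps < eps0 ->
    forall t, fst (fst (Phi N u (gammaC eps t))) <> RtoC 0.
Proof.
  intro Hu. destruct u as [u1 u2].
  unfold Phi, C2add, C2scal, hat; cbn [fst snd].
  assert (Hzero : forall eps t, 0 < eps ->
            (u1 + gammaC eps t * - Cconj u2)%C = RtoC 0 -> Cmod u1 = eps * Cmod u2).
  { intros eps t He F.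
    assert (F' : u1 = (gammaC eps t * Cconj u2)%C).
    { transitivity ((u1 + gammaC eps t * - Cconj u2) + gammaC eps t * Cconj u2)%C; [ring|].
      rewrite F. ring. }
    rewrite F', Cmod_mult, Cmod_conj, Cmod_gammaC; auto. }
  pose proof (Cmod_ge_0 u1). pose proof (Cmod_ge_0 u2).
  destruct (Req_dec (Cmod u1) 0) as [E|E].
  - exists 1. split; [lra|]. intros eps [He _] t F.
    apply Hu. specialize (Hzero eps t He F).
    assert (E2 : Cmod u2 = 0) by nra.
    apply Cmod_eq_0 in E. apply Cmod_eq_0 in E2. subst. reflexivity.
  - exists (Cmod u1 / (Cmod u2 + 1)). split; [apply Rdiv_lt_0_compat; lra|].
    intros eps [He Hlt] t F. specialize (Hzero eps t He F).
    apply (Rmult_lt_compat_r (Cmod u2 + 1)) in Hlt; [|lra].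
    unfold Rdiv in Hlt. rewrite Rmult_assoc, Rinv_l, Rmult_1_r in Hlt by lra. nra.
Qed.

Lemma fibre_integral_is_omega N u : 0 < N -> u <> C2zero ->
  exists eps0, 0 < eps0 /\ forall eps, 0 < eps < eps0 ->
    forall X Y, (RtoC (/ (2 * PI)) * fibre_int N eps u X Y)%C = omegaN N u X Y.
Proof.
  intros HN Hu. destruct (small_circles_in_chart N u Hu) as [eps0 [H0 Hchart]].
  exists eps0. split; [exact H0|]. intros eps He X Y.
  rewrite fibre_int_closed_form by (auto; lra).
  rewrite Cmult_assoc, <- RtoC_mult, Rinv_l; [apply Cmult_1_l|].
  pose proof PI_RGT_0. lra.
Qed.

(** ** (iii) omega_N = i d d-bar K *)

Lemma C2add_scal_0 q e : C2add q (C2scal (RtoC 0) e) = q.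
Proof. destruct q as [a b]; unfold C2add, C2scal; simpl. f_equal; ring. Qed.

Lemma has_dR0_nrm2 q e :
  has_dR0 (fun t => RtoC (nrm2 (C2add q (C2scal (RtoC t) e)))) (dnrm2C q e).
Proof.
  eapply has_dR0_ext. { intro t. rewrite nrm2_nrm2C. reflexivity. }
  unfold nrm2C, C2add, C2scal; cbn [fst snd].
  eapply has_dR0_eq; [derive_C|]. cbv beta. unfold dnrm2C. conjs. simpl_zero. ring.
Qed.

Lemma dnrm2C_real q e : RtoC (Re (dnrm2C q e)) = dnrm2C q e.
Proof. rewrite re_alt. unfold dnrm2C. conjs. field. Qed.

Lemma pdR_Kpot N q e : q <> C2zero ->
  pdR (Kpot N) q e = (dnrm2C q e * theta2C N q)%C.
Proof.
  intros Hq. pose proof (nrm2_pos q Hq) as Hp.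
  pose proof (has_dR0_Re _ _ (has_dR0_nrm2 q e)) as D.
  unfold pdR. eapply dR_of_has_dR0.
  - unfold Kpot. apply has_dR0_RtoC.
    apply is_derive_Reals. apply is_derive_Reals in D.
    apply (derivable_pt_lim_plus (fun t => nrm2 (C2add q (C2scal (RtoC t) e)))
       (fun t => N * ln (nrm2 (C2add q (C2scal (RtoC t) e))))); [exact D|].
    apply (derivable_pt_lim_scal (fun t => ln (nrm2 (C2add q (C2scal (RtoC t) e))))).
    apply (derivable_pt_lim_comp (fun t => nrm2 (C2add q (C2scal (RtoC t) e))) ln); [exact D|].
    apply derivable_pt_lim_ln. rewrite C2add_scal_0. exact Hp.
  - rewrite C2add_scal_0. unfold Re in *. rewrite RtoC_plus, !RtoC_mult, RtoC_inv by lra.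
    change (fst (dnrm2C q e)) with (Re (dnrm2C q e)). rewrite dnrm2C_real, nrm2_nrm2C.
    pose proof (nrm2C_neq_0 q Hq). unfold theta2C. field. auto.
Qed.

Definition coord (k : nat) (q : C2) : C := match k with 0%nat => fst q | _ => snd q end.
Definition kron (j k : nat) : C :=
  match j, k with 0%nat, 0%nat => RtoC 1 | S _, S _ => RtoC 1 | _, _ => RtoC 0 end.

Lemma Wdb_Kpot N k q : q <> C2zero -> Wdb k (Kpot N) q = (coord k q * theta2C N q)%C.
Proof.
  intros Hq. unfold Wdb. rewrite !pdR_Kpot by auto.
  destruct k; unfold e2, dnrm2C, coord; destruct q as [q1 q2]; cbn [fst snd];
    conjs; field_simplify; rewrite ?Ci_pow2; field.
Qed.

Lemma line_avoids_origin u e : u <> C2zero ->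
  locally 0 (fun t => C2add u (C2scal (RtoC t) e) <> C2zero).
Proof.
  intro Hu.
  pose proof (has_dR0_Re _ _ (has_dR0_nrm2 u e)) as D.
  assert (Hpos : locally 0 (fun t => 0 < nrm2 (C2add u (C2scal (RtoC t) e)))).
  { apply (ex_derive_continuous (fun t => nrm2 (C2add u (C2scal (RtoC t) e))) 0).
    - eexists; exact D.
    - apply open_gt. rewrite C2add_scal_0. apply nrm2_pos; auto. }
  revert Hpos. apply filter_imp. intros t Ht Z. rewrite Z, nrm2_zero in Ht. lra.
Qed.

(** Differentiating u^k theta^2 along a line; the identity of [Wdb_Kpot] holds
   only near u, on the lines that avoid the origin. *)
Lemma pdR_Wdb_Kpot N k u e : u <> C2zero ->
  pdR (Wdb k (Kpot N)) u e = (coord k e * theta2C N u + coord k u * dtheta2C N u e)%C.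
Proof.
  intros Hu. pose proof (nrm2C_neq_0 u Hu) as Hr. unfold pdR.
  assert (Hloc : locally 0 (fun t => Wdb k (Kpot N) (C2add u (C2scal (RtoC t) e))
      = (coord k (C2add u (C2scal (RtoC t) e)) * theta2C N (C2add u (C2scal (RtoC t) e)))%C)).
  { apply (filter_imp (fun t => C2add u (C2scal (RtoC t) e) <> C2zero));
      [| apply line_avoids_origin; auto].
    intros t Ht. apply Wdb_Kpot; auto. }
  unfold nrm2C in Hr.
  destruct k; (eapply dR_of_has_dR0;
    [ eapply has_dR0_ext_loc; [exact Hloc|];
      unfold coord, theta2C, nrm2C, C2add, C2scal; cbn [fst snd];
      derive_C; cbv beta; conjs; simpl_zero; auto
    | cbv beta; unfold coord, dtheta2C, dnrm2C, theta2C, nrm2C; cbn [fst snd];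
      conjs; simpl_zero; field; auto ]).
Qed.

Lemma Wd_Wdb_Kpot N j k u : u <> C2zero ->
  Wd j (Wdb k (Kpot N)) u
  = (kron j k * theta2C N u - RtoC N * coord k u * Cconj (coord j u) / (nrm2C u * nrm2C u))%C.
Proof.
  intros Hu. pose proof (nrm2C_neq_0 u Hu) as Hr. unfold Wd. rewrite !pdR_Wdb_Kpot by auto.
  (* the derivative in the direction i e_j is i times a real-direction expression *)
  assert (Hi : (coord k (e2 j Ci) * theta2C N u + coord k u * dtheta2C N u (e2 j Ci))%C =
     (Ci * (kron j k * theta2C N u
            + coord k u * (RtoC N * (- (Cconj (coord j u) - coord j u)) / (nrm2C u * nrm2C u))))%C).
  { unfold dtheta2C, dnrm2C. destruct j; destruct k; unfold coord, e2, kron; cbn [fst snd];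
      conjs; simpl_zero; field; auto. }
  rewrite Hi, Cmult_assoc, Ci_sq.
  unfold dtheta2C, dnrm2C. destruct j; destruct k; unfold coord, e2, kron; cbn [fst snd];
    conjs; simpl_zero; field; auto.
Qed.

Lemma omegaN_ddbar N u X Y : u <> C2zero ->
  omegaN N u X Y = (Ci * ddbar (Kpot N) u X Y)%C.
Proof.
  intros Hu. pose proof (nrm2C_neq_0 u Hu) as Hr.
  unfold ddbar, omegaN. rewrite !Wd_Wdb_Kpot, RtoC_pow, nrm2_nrm2C by auto.
  unfold wedge1, duj, dubj, du1, du2, dub1, dub2, coord, kron, theta2C, nrm2C in *.
  destruct u as [u1 u2]; destruct X as [x1 x2]; destruct Y as [y1 y2]; cbn [fst snd] in *.
  field. auto.
Qed.

Theorem mainTheorem3 (N : R) (HN : 0 < N) :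
  (* (i) *)
  (forall (u : C2) (s : C), u <> C2zero -> s <> RtoC 0 -> Squad N (Phi N u s)) /\
  (* (ii) iotaS is a fixed-point-free antiholomorphic involution of S *)
  ((forall p : C4, Squad N p -> Squad N (iotaS p)) /\
   (forall p : C4, Squad N p -> iotaS (iotaS p) = p) /\
   (forall p : C4, Squad N p -> iotaS p <> p) /\
   antiholomorphic4 iotaS /\
   (forall (u : C2) (s : C), u <> C2zero -> s <> RtoC 0 ->
      iotaS (Phi N u (RtoC (theta N u) * s)%C)
      = Phi N u (RtoC (theta N u) * (- / Cconj s))%C)) /\
  (* (iii) fibre integral over small circles, and omega_N = i d d-bar K *)
  (forall u : C2, u <> C2zero ->
     exists eps0 : R, 0 < eps0 /\
       forall eps : R, 0 < eps < eps0 ->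
         forall X Y : C2,
           (RtoC (/ (2 * PI)) * fibre_int N eps u X Y)%C = omegaN N u X Y) /\
  (forall u : C2, u <> C2zero ->
     forall X Y : C2, omegaN N u X Y = (Ci * ddbar (Kpot N) u X Y)%C).
Proof.
  split; [|split; [|split]].
  - intros u s. apply Phi_in_S; auto.
  - split; [|split; [|split; [|split]]].
    + apply iotaS_preserves_S.
    + intros p _. apply iotaS_involutive.
    + intros p. exact (iotaS_no_fixed_point N p HN).
    + apply iotaS_antiholomorphic.
    + intros u s _. apply iotaS_Phi; auto.
  - intros u. apply fibre_integral_is_omega; auto.
  - intros u Hu X Y. apply omegaN_ddbar; auto.
Qed.
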